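(* For every integer $k\geq 2$ and every tree $T$, $\nu_{k}(T) \geq \frac{\nu_{k-1}(T) + \nu_{k+1}(T)}{2}$.
   Context: For $k\geq 1$, $\nu_k(T)$ is the maximum number of edges of a $k$-edge-colorable subgraph of $T$ (a subgraph whose edges can be colored with $k$ colors so that adjacent edges get distinct colors). *)

From mathcomp Require Import all_boot.
Set Implicit Arguments. Unset Strict Implicit. Unset Printing Implicit Defensive.

Definition simple_graph (V : finType) (e : rel V) : Prop :=
  symmetric e /\ irreflexive e.

Definition edges (V : finType) (e : rel V) : {set {set V}} :=
  [set [set p.1; p.2] | p in [pred p : V * V | e p.1 p.2]].

Definition is_tree (V : finType) (e : rel V) : Prop :=
  [/\ simple_graph e, 0 < #|V|,
      (forall x y : V, connect e x y) & #|edges e| = #|V| - 1].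

Definition edge_colorable (V : finType) (k : nat) (F : {set {set V}}) : bool :=
  [exists c : {ffun {set V} -> 'I_k},
    [forall f in F, forall g in F,
       (f != g) && ~~ [disjoint f & g] ==> (c f != c g)]].

Definition nu (V : finType) (e : rel V) (k : nat) : nat :=
  \max_(F : {set {set V}} | (F \subset edges e) && edge_colorable k F) #|F|.

From mathcomp Require Import all_boot zify.
Set Implicit Arguments. Unset Strict Implicit. Unset Printing Implicit Defensive.

(* Let F1 and F2 be maximum (k-1)- and (k+1)-edge-colourable subgraphs of the
   tree. In a forest an edge set is k-edge-colourable as soon as its maximum
   degree is at most k, and every edge set splits into two halves whose degrees
   differ by at most one at each vertex; both facts follow by removing a pendant
   edge and putting it back last. Splitting the symmetric difference of F1 and
   F2 into two such halves D1 and D2, the sets (F1 :&: F2) :|: Di have maximum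
   degree at most k, hence are k-colourable, and together they have
   |F1| + |F2| edges.
   Acyclicity is used in the form "every nonempty edge set D has a vertex of
   degree one". Otherwise the set S of vertices covered by D has |S| <= |D|,
   every component of E :\: D meets S since the tree is connected, and
   |V| <= |E :\: D| + #components would give |V| <= |E| = |V| - 1. *)

Lemma proper_ind (T : finType) (P : {set T} -> Prop) :
  (forall A : {set T}, (forall B : {set T}, B \proper A -> P B) -> P A) ->
  forall A, P A.
Proof.
move=> IH A; elim: {A}#|A|.+1 {-2}A (ltnSn #|A|) => // n IHn A An.
by apply: IH => B /proper_card BA; apply: IHn; apply: leq_trans BA An.
Qed.

Lemma cardsU_disjoint (T : finType) (A B : {set T}) :
  [disjoint A & B] -> #|A :|: B| = #|A| + #|B|.
Proof. by move=> dAB; rewrite cardsU (disjoint_setI0 dAB) cards0 subn0. Qed.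

Section EdgeSets.
Variable V : finType.
Implicit Types (D F G : {set {set V}}) (f g : {set V}) (u v w x y : V).

Definition deg F v := #|[set f in F | v \in f]|.

Lemma degE F v : deg F v = \sum_(f in F) (v \in f).
Proof.
rewrite /deg -sum1_card big_mkcond [RHS]big_mkcond /=.
by apply: eq_bigr => f _; rewrite inE; case: (f \in F); case: (v \in f).
Qed.

Lemma deg_setID F G v : deg F v = deg (F :&: G) v + deg (F :\: G) v.
Proof. by rewrite !degE (big_setID G). Qed.

Lemma deg_setU F G v : [disjoint F & G] -> deg (F :|: G) v = deg F v + deg G v.
Proof.
by move=> dFG; rewrite (deg_setID _ F) setUK setDUl setDv set0U (setDidPl _) // disjoint_sym.
Qed.

Lemma deg_setD1 F f v : f \in F -> deg F v = (v \in f) + deg (F :\ f) v.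
Proof. by move=> fF; rewrite !degE (big_setD1 _ fF). Qed.

Lemma deg_setU1 F f v : f \notin F -> deg (f |: F) v = (v \in f) + deg F v.
Proof. by move=> fF; rewrite !degE big_setU1. Qed.

Lemma deg_subset F G v : F \subset G -> deg F v <= deg G v.
Proof. by move=> FG; rewrite (deg_setID G F) (setIidPr FG) leq_addr. Qed.

Lemma deg_eq0 F g v : deg F v = 0 -> g \in F -> v \notin g.
Proof.
by move=> /cards0_eq/setP/(_ g) + gF; rewrite !inE gF => /negbT.
Qed.

Lemma sum_deg F : {in F, forall f, #|f| = 2} -> \sum_v deg F v = 2 * #|F|.
Proof.
move=> F2; rewrite (eq_bigr _ (fun v _ => degE F v)) exchange_big /=.
rewrite -sum1_card big_distrr /=; apply: eq_bigr => f fF.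
rewrite muln1 -(F2 f fF) -sum1_card [RHS]big_mkcond.
by apply: eq_bigr => v _; case: (v \in f).
Qed.

Lemma meetP f g : reflect (exists2 w, w \in f & w \in g) (~~ [disjoint f & g]).
Proof.
rewrite -setI_eq0; apply: (iffP (set0Pn _)) => [[w]|[w wf wg]].
  by rewrite inE => /andP[]; exists w.
by exists w; rewrite inE wf wg.
Qed.

Lemma edge_colorableP k F :
  reflect (exists c : {ffun {set V} -> 'I_k},
             {in F &, forall f g, f != g -> ~~ [disjoint f & g] -> c f != c g})
          (edge_colorable k F).
Proof.
apply: (iffP existsP) => [[c /forall_inP cF]|[c cF]]; exists c.
  by move=> f g fF gF fg fgd; apply: (implyP (forall_inP (cF f fF) g gF)); rewrite fg.
apply/forall_inP => f fF; apply/forall_inP => g gF; apply/implyP => /andP[].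
exact: cF.
Qed.

Lemma edge_colorable0 k : 0 < k -> edge_colorable k (set0 : {set {set V}}).
Proof. by move=> k0; apply/edge_colorableP; exists [ffun=> Ordinal k0] => f; rewrite inE. Qed.

Lemma colorable_deg_leq k F v : edge_colorable k F -> deg F v <= k.
Proof.
case/edge_colorableP => c cF; rewrite /deg -(@card_in_imset _ _ c).
  by apply: leq_trans (max_card _) _; rewrite card_ord.
move=> f g; rewrite !inE => /andP[fF vf] /andP[gF vg] cfg; apply/eqP.
apply: contraTT (eqxx (c g)) => fg; rewrite -{1}cfg.
by apply: cF => //; apply/meetP; exists v.
Qed.

Lemma colorable_setU1 k F f u : edge_colorable k F -> deg F u < k ->
  {in F, forall g, ~~ [disjoint f & g] -> u \in g} -> edge_colorable k (f |: F).
Proof.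
case/edge_colorableP => c cF degu fu.
pose U := c @: [set g in F | u \in g].
have /subsetPn[col _ colU] : ~~ ([set: 'I_k] \subset U).
  apply: contraTN degu => /subset_leq_card; rewrite cardsT card_ord -leqNgt.
  by move/leq_trans; apply; apply: leq_imset_card.
have fresh : {in F, forall g, ~~ [disjoint f & g] -> col != c g}.
  move=> g gF /(fu g gF) ug; apply: contraNneq colU => ->.
  by apply/imsetP; exists g; rewrite // inE gF.
apply/edge_colorableP; exists [ffun g => if g == f then col else c g].
move=> g h; rewrite !inE !ffunE.
case: (eqVneq g f) => [->|gf] /= gF; case: (eqVneq h f) => [->|hf] /= hF gh dgh.
- by [].
- exact: fresh.
- by rewrite eq_sym; apply: fresh; rewrite // disjoint_sym.
- exact: cF.
Qed.

Definition edge_rel F : rel V := fun x y => [set x; y] \in F.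
Definition component F x : {set V} := [set y | connect (edge_rel F) x y].
Definition components F : {set {set V}} := component F @: setT.

Lemma edge_rel_connect_sym F : connect_sym (edge_rel F).
Proof. by apply: sym_connect_sym => x y; rewrite /edge_rel setUC. Qed.

Lemma component_eq F x y : connect (edge_rel F) x y -> component F x = component F y.
Proof.
by move=> xy; apply/setP => z; rewrite !inE (same_connect (@edge_rel_connect_sym F) xy).
Qed.

Lemma edge_rel_closed_connect F (A : {pred V}) x y :
    (forall a b, edge_rel F a b -> a \in A -> b \in A) ->
  connect (edge_rel F) x y -> x \in A -> y \in A.
Proof.
by move=> clA xy; rewrite -(closed_connect (intro_closed (@edge_rel_connect_sym F) clA) xy).
Qed.

Lemma card_components0 : #|components set0| = #|V|.
Proof.
rewrite card_imset ?cardsT // => x y /setP/(_ y); rewrite !inE connect0.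
by case/connectP => -[|z p] //= /andP[]; rewrite /edge_rel inE.
Qed.

Lemma component_setD1 F x y v :
    ~~ connect (edge_rel (F :\ [set x; y])) v x ->
    ~~ connect (edge_rel (F :\ [set x; y])) v y ->
  component (F :\ [set x; y]) v = component F v.
Proof.
set F' := F :\ _ => nvx nvy; apply/setP => w; rewrite !inE; apply/idP/idP.
  by apply: connect_sub => a b /setD1P[_ ab]; apply: connect1.
move=> vw; apply: (edge_rel_closed_connect
  (A := [pred w | connect (edge_rel F') v w]) _ vw); last by rewrite inE connect0.
move=> a b ab; rewrite !inE => va.
have [abxy|abxy] := eqVneq [set a; b] [set x; y].
  have : a \in [set x; y] by rewrite -abxy set21.
  by case/set2P => ax; rewrite -ax va in nvx nvy.
by apply: connect_trans va (connect1 _); apply/setD1P.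
Qed.

Lemma card_components_setD1 F x y :
  #|components (F :\ [set x; y])| <= #|components F|.+1.
Proof.
set F' := F :\ _.
have sub : components F' \subset
    (components F :\ component F x) :|: [set component F' x; component F' y].
  apply/subsetP => _ /imsetP[v _ ->]; rewrite !inE.
  have [vx|nvx] := boolP (connect (edge_rel F') v x).
    by rewrite (component_eq vx) eqxx orbT.
  have [vy|nvy] := boolP (connect (edge_rel F') v y).
    by rewrite (component_eq vy) eqxx !orbT.
  have E : component F' v = component F v := component_setD1 nvx nvy.
  rewrite E imset_f ?inE // andbT; apply/orP; left; apply: contraNneq nvx => vx.
  have : x \in component F' v by rewrite E vx inE.
  by rewrite inE.
apply: leq_trans (subset_leq_card sub) _.
rewrite (cardsD1 (component F x) (components F)) imset_f ?inE // add1n -addn2.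
apply: leq_trans (leq_card_setU _ _) _; rewrite leq_add2l cards2.
by case: (_ != _).
Qed.

Lemma card_leq_edges_components F : {in F, forall f, exists x y, f = [set x; y]} ->
  #|V| <= #|F| + #|components F|.
Proof.
elim/proper_ind: F => F IH pairF.
have [->|[f fF]] := set_0Vmem F; first by rewrite cards0 card_components0.
have [x [y fxy]] := pairF f fF; subst f.
have cardF := cardsD1 [set x; y] F; rewrite fF add1n in cardF.
apply: leq_trans (IH _ (properD1 fF) (sub_in1 (fun g => subsetP (subsetDl F _) g) pairF)) _.
by rewrite cardF addSnnS leq_add2l card_components_setD1.
Qed.

Definition support F := [set v | 0 < deg F v].

Lemma mem_support F f v : f \in F -> v \in f -> v \in support F.
Proof. by move=> fF vf; rewrite inE card_gt0; apply/set0Pn; exists f; rewrite inE fF. Qed.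

Lemma card_support_leq F : {in F, forall f, #|f| = 2} -> (forall v, deg F v != 1) ->
  #|support F| <= #|F|.
Proof.
move=> F2 deg_neq1; rewrite -(leq_pmul2l (isT : 0 < 2)) -sum_deg // -sum1_card.
rewrite big_distrr /= muln1 [X in _ <= X](bigID [in support F]) /=.
apply: leq_trans (leq_addr _ _); apply: leq_sum => v; rewrite inE.
by have := deg_neq1 v; case: (deg F v) => [|[|d]].
Qed.

Lemma card_components_setD_leq E F : (forall x y, connect (edge_rel E) x y) ->
  support F != set0 -> #|components (E :\: F)| <= #|support F|.
Proof.
move=> connE /set0Pn[p pF].
apply: leq_trans (leq_imset_card (component (E :\: F)) (support F)).
apply/subset_leq_card/subsetP => _ /imsetP[v _ ->].
have [/exists_inP[s sF vs]|/exists_inPn nreach] :=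
  boolP [exists s in support F, connect (edge_rel (E :\: F)) v s].
  by rewrite (component_eq vs) imset_f.
suff vp : connect (edge_rel (E :\: F)) v p by have := nreach p pF; rewrite vp.
apply: (edge_rel_closed_connect
  (A := [pred w | connect (edge_rel (E :\: F)) v w]) _ (connE v p)); last first.
  by rewrite inE connect0.
move=> a b ab; rewrite !inE => va.
have abF : [set a; b] \notin F.
  by apply/negP => abF; have := nreach a (mem_support abF (set21 a b)); rewrite va.
by apply: connect_trans va (connect1 _); rewrite /edge_rel inE abF.
Qed.

Lemma edges_pair (e : rel V) f : f \in edges e -> exists x y, e x y /\ f = [set x; y].
Proof. by case/imsetP => -[x y] /= exy ->; exists x, y. Qed.

Lemma card_edge (e : rel V) f : irreflexive e -> f \in edges e -> #|f| = 2.
Proof.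
move=> irr /edges_pair[x [y [exy ->]]]; rewrite cards2.
by case: eqVneq exy => // ->; rewrite irr.
Qed.

Lemma tree_leaf (e : rel V) F : is_tree e -> F \subset edges e -> F != set0 ->
  exists v, deg F v = 1.
Proof.
case=> [[_ irr] V_gt0 conn cardE] FE F0.
have [v /eqP|deg_neq1] := pickP (fun v => deg F v == 1); first by exists v.
have F2 : {in F, forall f, #|f| = 2} := fun f fF => card_edge irr (subsetP FE f fF).
have suppF : support F != set0.
  case/set0Pn: F0 => f fF; have [x [y [_ fxy]]] := edges_pair (subsetP FE f fF).
  by apply/set0Pn; exists x; apply: (mem_support fF); rewrite fxy set21.
have connE x y : connect (edge_rel (edges e)) x y.
  by apply: connect_sub (conn x y) => a b eab; apply/connect1/imsetP; exists (a, b).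
have pairs : {in edges e :\: F, forall f, exists x y, f = [set x; y]}.
  by move=> f /setDP[/edges_pair[x [y [_ ->]]] _]; exists x, y.
have := card_leq_edges_components pairs.
have := card_components_setD_leq connE suppF.
have := card_support_leq F2 (fun v => negbT (deg_neq1 v)).
rewrite cardsDS //; have := subset_leq_card FE; rewrite cardE.
lia.
Qed.

(* For sets of 2-element edges this characterises exactly the forests. *)
Definition forest D :=
  {in D, forall f, #|f| = 2} /\ forall F, F \subset D -> F != set0 -> exists v, deg F v = 1.

Lemma tree_forest (e : rel V) : is_tree e -> forest (edges e).
Proof.
move=> tr; split; last by move=> F; apply: tree_leaf.
by case: tr => -[_ irr] _ _ _ f; apply: card_edge.
Qed.

Section Forest.
Variable D : {set {set V}}.
Hypothesis forestD : forest D.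

Lemma forest_pendant F : F \subset D -> F != set0 ->
  exists v u, [set v; u] \in F /\ deg (F :\ [set v; u]) v = 0.
Proof.
case: forestD => D2 leaf FD F0; have [v /eqP/cards1P[f Fv]] := leaf F FD F0.
have : f \in [set g in F | v \in g] by rewrite Fv set11.
rewrite inE => /andP[fF vf].
have /cards2P[x [y [_ fxy]]] : #|f| == 2 by rewrite D2 // (subsetP FD).
have [u fvu] : exists u, f = [set v; u].
  by move: vf; rewrite fxy => /set2P[]->; [exists y | exists x; rewrite setUC].
exists v, u; rewrite -fvu; split=> //.
by move: (deg_setD1 v fF); rewrite vf {1}/deg Fv cards1 add1n => -[].
Qed.

Lemma forest_colorable k F : 0 < k -> F \subset D -> (forall v, deg F v <= k) ->
  edge_colorable k F.
Proof.
move=> k_gt0; elim/proper_ind: F => F IH FD degF.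
have [->|F0] := eqVneq F set0; first exact: edge_colorable0.
have [v [u [fF degv]]] := forest_pendant FD F0; set f := [set v; u] in fF degv *.
rewrite -(setD1K fF); apply: (colorable_setU1 (u := u)).
- apply: IH (properD1 fF) (subset_trans (subsetDl _ _) FD) _ => w.
  exact: leq_trans (deg_subset w (subsetDl _ _)) (degF w).
- by have := degF u; rewrite (deg_setD1 u fF) set22.
- move=> g gF /meetP[w /set2P[->|->] // vg].
  by rewrite (negPf (deg_eq0 degv gF)) in vg.
Qed.

Lemma forest_balanced_split F : F \subset D -> exists F1 F2,
  [/\ [disjoint F1 & F2], F1 :|: F2 = F &
       forall v, deg F1 v <= (deg F2 v).+1 /\ deg F2 v <= (deg F1 v).+1].
Proof.
elim/proper_ind: F => F IH FD.
have [->|F0] := eqVneq F set0.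
  by exists set0, set0; split=> [||v]; rewrite ?setU0 ?degE ?big_set0 // -setI_eq0 setI0.
have [v [u [fF degv]]] := forest_pendant FD F0; set f := [set v; u] in fF degv *.
have [F1 [F2 [dF12 F12 bal]]] := IH _ (properD1 fF) (subset_trans (subsetDl _ _) FD).
wlog le12 : F1 F2 dF12 F12 bal / deg F1 u <= deg F2 u.
  move=> hwlog; case: (leqP (deg F1 u) (deg F2 u)) => [|/ltnW]; first exact: hwlog.
  by apply: (hwlog F2 F1); rewrite 1?disjoint_sym 1?setUC // => w; case: (bal w).
have fF1 : f \notin F1 by apply/negP => fF1; move: (setD11 f F); rewrite -F12 inE fF1.
have fF2 : f \notin F2 by apply/negP => fF2; move: (setD11 f F); rewrite -F12 inE fF2 orbT.
exists (f |: F1), F2; split.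
- by rewrite -setI_eq0 setIUl (disjoint_setI0 dF12) setU0 setI_eq0 disjoints1.
- by rewrite -setUA F12 setD1K.
move=> w; rewrite deg_setU1 // -/f; have [b1 b2] := bal w.
have [wf|_] := boolP (w \in f); last by rewrite add0n.
suff : deg F1 w <= deg F2 w by rewrite add1n; lia.
move: wf => /set2P[->|-> //].
by move: degv; rewrite -F12 deg_setU // => /eqP; rewrite addn_eq0 => /andP[/eqP-> _].
Qed.

Lemma forest_colorable_exchange a b k F1 F2 : 0 < k -> a + b = 2 * k ->
    F1 \subset D -> F2 \subset D -> edge_colorable a F1 -> edge_colorable b F2 ->
  exists G1 G2, [/\ G1 \subset D, G2 \subset D, edge_colorable k G1,
    edge_colorable k G2 & #|G1| + #|G2| = #|F1| + #|F2|].
Proof.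
move=> k_gt0 abk F1D F2D colF1 colF2.
set C := F1 :&: F2; set X := F1 :\: F2; set Y := F2 :\: F1.
have dXY : [disjoint X & Y].
  by rewrite -setI_eq0; apply/eqP/setP => g; rewrite !inE; case: (g \in F1) (g \in F2) => [] [].
have dCXY : [disjoint C & X :|: Y].
  by rewrite -setI_eq0; apply/eqP/setP => g; rewrite !inE; case: (g \in F1) (g \in F2) => [] [].
have XYD : X :|: Y \subset D by rewrite subUset !(subset_trans (subsetDl _ _)).
have [D1 [D2 [dD12 D12 bal]]] := forest_balanced_split XYD.
have D1XY : D1 \subset X :|: Y by rewrite -D12 subsetUl.
have D2XY : D2 \subset X :|: Y by rewrite -D12 subsetUr.
have dCD1 := disjointWr D1XY dCXY; have dCD2 := disjointWr D2XY dCXY.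
have CD : C \subset D := subset_trans (subsetIl _ _) F1D.
have degCD v : deg C v + deg D1 v <= k /\ deg C v + deg D2 v <= k.
  have := colorable_deg_leq v colF1; have := colorable_deg_leq v colF2.
  rewrite (deg_setID F1 F2) (deg_setID F2 F1) [F2 :&: F1]setIC -/C -/X -/Y.
  have := bal v; have := deg_setU v dD12; rewrite D12 deg_setU //; lia.
have G1D : C :|: D1 \subset D by rewrite subUset CD (subset_trans D1XY XYD).
have G2D : C :|: D2 \subset D by rewrite subUset CD (subset_trans D2XY XYD).
exists (C :|: D1), (C :|: D2); split=> //.
- by apply: forest_colorable G1D _ => // v; rewrite deg_setU //; case: (degCD v).
- by apply: forest_colorable G2D _ => // v; rewrite deg_setU //; case: (degCD v).
rewrite !cardsU_disjoint // -(cardsID F2 F1) -(cardsID F1 F2) [F2 :&: F1]setIC -/C -/X -/Y.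
by rewrite addnACA [RHS]addnACA -(cardsU_disjoint dD12) -(cardsU_disjoint dXY) D12.
Qed.
End Forest.

Lemma leq_card_nu (e : rel V) k F :
  F \subset edges e -> edge_colorable k F -> #|F| <= nu e k.
Proof.
move=> FE colF.
by apply: (@leq_bigmax_cond _ (fun F => (F \subset edges e) && edge_colorable k F)); rewrite FE.
Qed.

Lemma nu_witness (e : rel V) k : 0 < k ->
  exists F, [/\ F \subset edges e, edge_colorable k F & #|F| = nu e k].
Proof.
move=> k_gt0; pose P F := (F \subset edges e) && edge_colorable k F.
have P0 : P set0 by rewrite /P sub0set edge_colorable0.
have [F /andP[FE colF] maxF] := @arg_maxnP _ set0 P (fun F => #|F|) P0.
exists F; split=> //; apply/eqP; rewrite eqn_leq leq_card_nu //=.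
by apply/bigmax_leqP => G; apply: maxF.
Qed.

Lemma forest_nu_midpoint (e : rel V) a b k : forest (edges e) ->
  0 < a -> 0 < b -> a + b = 2 * k -> nu e a + nu e b <= 2 * nu e k.
Proof.
move=> forestE a_gt0 b_gt0 abk; have k_gt0 : 0 < k by lia.
have [F1 [F1E colF1 <-]] := nu_witness e a_gt0.
have [F2 [F2E colF2 <-]] := nu_witness e b_gt0.
have [G1 [G2 [G1E G2E colG1 colG2 <-]]] :=
  forest_colorable_exchange forestE k_gt0 abk F1E F2E colF1 colF2.
by rewrite mul2n -addnn leq_add // leq_card_nu.
Qed.
End EdgeSets.

Theorem corollary1 (V : finType) (e : rel V) (k : nat) :
  2 <= k -> is_tree e ->
  nu e (k.-1) + nu e (k.+1) <= 2 * nu e k.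
Proof.
by move=> k_ge2 tree_e; apply: forest_nu_midpoint (tree_forest tree_e) _ _ _; lia.
Qed.
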